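(* Let $0<c<1$ and $0<d<1$ be irrational numbers, and let $f(n)=[c(n+1)]-[cn]$ and $g(n)=[d(n+1)]-[dn]$. Then for every real $t\ge0$, $$\sum_{n\le t} f(n)\,g([cn]+1)=[d([c([t]+1)]+1)],$$ where the sum is over positive integers $n\le t$.
   Context: $[x]$ is the greatest integer not exceeding $x$. Note $f$ is the indicator of $\{[j/c]:j\ge1\}$ and $g$ the indicator of $\{[j/d]:j\ge1\}$. *)

From HB Require Import structures.
From mathcomp Require Import all_boot all_order all_algebra.
From mathcomp Require Import reals.
Set Implicit Arguments. Unset Strict Implicit. Unset Printing Implicit Defensive.
Import Order.TTheory GRing.Theory Num.Theory.
Local Open Scope ring_scope.

(* [x] = Num.floor x (greatest integer not exceeding x), an int. *)

Definition fdiff (R : realType) (c : R) (n : int) : int :=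
  Num.floor (c * (n + 1)%:~R) - Num.floor (c * n%:~R).

From HB Require Import structures.
From mathcomp Require Import all_boot all_order all_algebra.
From mathcomp Require Import reals zify.
Import Order.TTheory GRing.Theory Num.Theory.
Local Open Scope ring_scope.

(* The sum telescopes: when f(n) = 1 we have [c(n+1)] = [cn] + 1, so the term
   f(n) g([cn] + 1) is the increment of G(n) := [d([cn] + 1)] from n to n + 1,
   and when f(n) = 0 both vanish. *)

Lemma floorD_le1 {R : realType} (x c : R) : 0 <= c <= 1 ->
  Num.floor (x + c) = Num.floor x \/ Num.floor (x + c) = Num.floor x + 1.
Proof.
case/andP=> c_ge0 c_le1.
have lo : Num.floor x <= Num.floor (x + c) by apply: le_floor; rewrite lerDl.
have hi : Num.floor (x + c) <= Num.floor x + 1.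
  by rewrite -[in X in _ <= X](floor1 R) -floorDrz ?rpred1 // le_floor // lerD2l.
lia.
Qed.

Lemma fdiff_mul_fdiff {R : realType} (c d : R) (n : int) : 0 <= c <= 1 ->
  fdiff c n * fdiff d (Num.floor (c * n%:~R) + 1)
  = Num.floor (d * (Num.floor (c * (n + 1)%:~R) + 1)%:~R)
    - Num.floor (d * (Num.floor (c * n%:~R) + 1)%:~R).
Proof.
move=> c01; rewrite /fdiff.
have -> : c * (n + 1)%:~R = c * n%:~R + c by rewrite intrD mulrDr mulr1.
case: (floorD_le1 (c * n%:~R) c c01) => ->.
  by rewrite !subrr mul0r.
by rewrite addrAC subrr add0r mul1r.
Qed.

Lemma sum_fdiff_mul_fdiff {R : realType} (c d : R) (N : nat) :
  0 <= c < 1 -> 0 <= d < 1 ->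
  \sum_(1 <= n < N.+1) fdiff c n%:Z * fdiff d (Num.floor (c * n%:R) + 1)
  = Num.floor (d * (Num.floor (c * N.+1%:R) + 1)%:~R).
Proof.
move=> /andP[c_ge0 c_lt1] /andP[d_ge0 d_lt1].
pose G (k : nat) := Num.floor (d * (Num.floor (c * k%:R) + 1)%:~R).
rewrite (telescope_sumr_eq G) // => [|k _]; last first.
  by rewrite fdiff_mul_fdiff ?c_ge0 ?ltW // -[k.+1]addn1.
have floor01 (x : R) : 0 <= x < 1 -> Num.floor x = 0.
  by move=> /andP[x0 x1]; apply/eqP; rewrite floor_eq add0r x0.
rewrite /G mulr1 (floor01 c) ?c_ge0 // add0r mulr1.
by rewrite (floor01 d) ?d_ge0 // subr0.
Qed.

Theorem lemma7 (R : realType) (c d : R) :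
  0 < c -> c < 1 -> 0 < d -> d < 1 -> reals.irrational c -> reals.irrational d ->
  forall t : R, 0 <= t ->
  \sum_(1 <= n < (absz (Num.floor t)).+1)
      fdiff c n%:Z * fdiff d (Num.floor (c * n%:R) + 1)
  = Num.floor (d * (Num.floor (c * (Num.floor t + 1)%:~R) + 1)%:~R).
Proof.
move=> c0 c1 d0 d1 _ _ t t0.
rewrite sum_fdiff_mul_fdiff ?ltW ?c0 ?d0 //.
have -> : Num.floor t = (absz (Num.floor t))%:Z by rewrite gez0_abs ?floor_ge0.
by rewrite -[(absz _).+1]addn1.
Qed.
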